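(* (1) For $n\ge1$, the primary theta-seed $\Delta_1(\boldsymbol{\theta}_n)$ lies in $T_n$. (2) For $n\ge 3$, the secondary theta-seed $\Delta_2(\boldsymbol{\theta}_n)$ lies in $T_n$.
   Context: Let $\mathbb{Q}[\boldsymbol{\theta}_n,\boldsymbol{\xi}_n,\boldsymbol{\rho}_n]$ be the $\mathbb{Q}$-algebra generated by $3n$ pairwise anticommuting variables $\theta_i,\xi_i,\rho_i$ ($1\le i\le n$), with $\mathfrak{S}_n$ acting by permuting indices simultaneously in all three sets. For any of these variables $\alpha_j$, the derivative is defined on monomials by $\partial_{\alpha_j}(\alpha_{i_1}\cdots\alpha_{i_k}) = (-1)^{\ell-1}\alpha_{i_1}\cdots\widehat{\alpha_{i_\ell}}\cdots\alpha_{i_k}$ if the variable $\alpha_j$ equals the $\ell$-th factor, and $0$ if it does not occur, extended linearly. The space of triagonal fermionic harmonics is $T_n:=\{f : \sum_{i=1}^n\partial_{\theta_i}^h\partial_{\xi_i}^k\partial_{\rho_i}^\ell f=0 \text{ for all } h,k,\ell\ge0,\ h+k+\ell>0\}$. Define $\Delta_1(\boldsymbol{\theta}_n):=\sum_{\sigma\in\mathfrak{S}_n}\mathrm{sgn}(\sigma)\sigma(\theta_1\theta_2\cdots\theta_{n-1})$ and, for $n\ge3$, $\Delta_2(\boldsymbol{\theta}_n):=\sum_{\sigma\in\mathfrak{S}_n}\mathrm{sgn}(\sigma)\sigma\bigl((\theta_1\xi_2\rho_2+\theta_2\xi_1\rho_2+\theta_2\xi_2\rho_1)\theta_3\theta_4\cdots\theta_{n-1}\bigr)$,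 where empty products of $\theta$'s are $1$. *)

From HB Require Import structures.
From mathcomp Require Import all_boot all_order all_algebra all_fingroup.
Set Implicit Arguments. Unset Strict Implicit. Unset Printing Implicit Defensive.
Import GRing.Theory.
Local Open Scope ring_scope.

(* The exterior algebra Q[theta_n, xi_n, rho_n] on 3n anticommuting generators.
   A generator is a pair (c, i) : 'I_3 * 'I_n, with kind c = 0 (theta),
   1 (xi), 2 (rho), and index i (0-based: paper's index i+1).
   An element is a rational-coefficient combination of the basis monomials
   e_S (S a set of generators), e_S = product of the elements of S written in
   increasing order w.r.t. the enumeration order of the finType [var n]. *)

Definition var (n : nat) := ('I_3 * 'I_n)%type.
Definition ext (n : nat) := {ffun {set var n} -> rat^o}.

Definition kth : 'I_3 := @Ordinal 3 0 isT.
Definition kxi : 'I_3 := @Ordinal 3 1 isT.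
Definition krho : 'I_3 := @Ordinal 3 2 isT.

Definition theta n (i : 'I_n) : var n := (kth, i).
Definition xi n (i : 'I_n) : var n := (kxi, i).
Definition rho n (i : 'I_n) : var n := (krho, i).

Fixpoint inversions n (w : seq (var n)) : nat :=
  match w with
  | [::] => 0
  | x :: w' => (count (fun y => enum_rank y < enum_rank x) w' + inversions w')%N
  end.

(* the value of the word (product) x_1 x_2 ... x_k in the exterior algebra *)
Definition mono n (w : seq (var n)) : ext n :=
  if uniq w then
    ((-1) ^+ inversions w : rat) *: [ffun S : {set var n} => if S == [set x in w] then (1 : rat^o) else 0] : ext n
  else 0.

(* the derivative d_a: on a basis monomial e_S written as a_{1}...a_{k} in
   increasing order, d_a e_S = (-1)^(l-1) e_{S \ a} when a is the l-th factor,
   and 0 if a does not occur; extended linearly. *)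
Definition deriv n (a : var n) (f : ext n) : ext n :=
  [ffun T : {set var n} => if a \in T then 0
             else (-1) ^+ (index a (enum (a |: T))) * f (a |: T)].

Definition actv n (s : 'S_n) (x : var n) : var n := (x.1, s x.2).
Definition act n (s : 'S_n) (f : ext n) : ext n :=
  \sum_(S : {set var n}) (f S : rat) *: mono (map (actv s) (enum S)).

Definition triag_harmonic n (f : ext n) : Prop :=
  forall h k l : nat, (0 < h + k + l)%N ->
    \sum_(i < n) iter h (deriv (theta i)) (iter k (deriv (xi i))
                      (iter l (deriv (rho i)) f)) = 0.

(* vw c k = the one-letter word [(c, k)] when k < n (0-based index k) *)
Definition vw n (c : 'I_3) (k : nat) : seq (var n) :=
  [seq (c, i) | i <- enum 'I_n & val i == k].

Definition thetas n (a b : nat) : seq (var n) := flatten [seq vw n kth k | k <- iota a b].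

Definition Delta1 n : ext n :=
  \sum_(s : 'S_n) ((-1) ^+ s : rat) *: act s (mono (thetas n 0 n.-1)).

(* (theta_1 xi_2 rho_2 + theta_2 xi_1 rho_2 + theta_2 xi_2 rho_1) theta_3 ... theta_{n-1};
   the product of monomials is the monomial of the concatenated word *)
Definition Delta2_seed n : ext n :=
  mono (vw n kth 0 ++ vw n kxi 1 ++ vw n krho 1 ++ thetas n 2 (n - 3))
  + mono (vw n kth 1 ++ vw n kxi 0 ++ vw n krho 1 ++ thetas n 2 (n - 3))
  + mono (vw n kth 1 ++ vw n kxi 1 ++ vw n krho 0 ++ thetas n 2 (n - 3)).

Definition Delta2 n : ext n :=
  \sum_(s : 'S_n) ((-1) ^+ s : rat) *: act s (Delta2_seed n).

(* Write alt f for the alternant sum_s sgn(s) s.f, so that Delta1 and Delta2 are the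
   alternants of their seeds. The operators sum_i d_(theta_i)^h d_(xi_i)^k d_(rho_i)^l
   commute with the action of S_n, hence with alt, and alt kills everything fixed by a
   transposition, in particular every monomial missing two indices. Differentiating a
   seed monomial at index i gives either 0 or a monomial that misses index n, and also
   index i once all variables of index i have been differentiated away, which is
   automatic when there is at most one of them. This settles Delta1 completely, and
   Delta2 except for single derivatives at index 2; there
   d_(theta_2) f = (xi_1 rho_2 + xi_2 rho_1) theta_3 ... theta_(n-1), and similarly for
   xi_2 and rho_2, is of the form g + (1 2).g, which alt kills as well. *)

From HB Require Import structures.
From mathcomp Require Import all_boot all_order all_algebra all_fingroup.
Set Implicit Arguments. Unset Strict Implicit. Unset Printing Implicit Defensive.
Import GRing.Theory.
Local Open Scope ring_scope.

(** * Monomials and derivatives *)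

Section ExteriorAlgebra.
Variable n : nat.
Local Notation V := (var n).
Local Notation E := (ext n).
Implicit Types (S T : {set V}) (a x y : V) (w : seq V) (f g : E).

Definition rank_lt x y := (enum_rank x < enum_rank y)%N.
Definition nbelow x S : nat := \sum_(y in S) rank_lt y x.

Lemma rank_lt_trans : transitive rank_lt.
Proof. by move=> y x z; apply: ltn_trans. Qed.

Lemma rank_ltxx x : rank_lt x x = false.
Proof. exact: ltnn. Qed.

Lemma rank_ltNge x y : x != y -> rank_lt x y = ~~ rank_lt y x.
Proof.
move=> neq_xy; rewrite /rank_lt; case: ltngtP => // /val_inj/enum_rank_inj eq_yx.
by rewrite eq_yx eqxx in neq_xy.
Qed.

Lemma enum_rank_index x : enum_rank x = index x (enum {: V}) :> nat.
Proof.
by rewrite -{2}(nth_enum_rank x x) index_uniq ?enum_uniq // -cardE ltn_ord.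
Qed.

Lemma sorted_enum_set S : sorted rank_lt (enum S).
Proof.
have -> : enum S = filter (mem S) (enum {: V}) by rewrite enumT.
apply: sorted_filter; first exact: rank_lt_trans.
case def_s: (enum {: V}) => [|x0 s] //; rewrite -def_s.
apply/(sortedP x0) => i lt_i1; rewrite /rank_lt !enum_rank_index.
by rewrite !index_uniq ?enum_uniq // ltnW.
Qed.

Lemma count_below_path x w : path rank_lt x w -> count (rank_lt^~ x) w = 0%N.
Proof.
move/(order_path_min rank_lt_trans)/allP => xw.
apply/eqP; rewrite -leqn0 leqNgt -has_count; apply/hasPn => y /xw.
by rewrite /rank_lt => lt_xy; rewrite -leqNgt ltnW.
Qed.

Lemma inversions_sorted w : sorted rank_lt w -> inversions w = 0%N.
Proof.
elim: w => //= x w IHw xw.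
by rewrite count_below_path // IHw // (path_sorted xw).
Qed.

Lemma index_sorted x w : sorted rank_lt w -> x \in w ->
  index x w = count (rank_lt^~ x) w.
Proof.
elim: w => //= y w IHw yw; rewrite inE eq_sym.
have [<- _|neq_yx /= xw] := eqVneq y x; first by rewrite rank_ltxx count_below_path.
rewrite IHw ?(path_sorted yw) //.
by rewrite (allP (order_path_min rank_lt_trans yw) x xw).
Qed.

Lemma nbelowE x S : nbelow x S = count (rank_lt^~ x) (enum S).
Proof. by rewrite -sumn_count sumnE big_map big_enum. Qed.

Lemma index_enum_set x S : x \in S -> index x (enum S) = nbelow x S.
Proof. by move=> Sx; rewrite nbelowE index_sorted ?mem_enum ?sorted_enum_set. Qed.

Lemma nbelowU1 x a S : a \notin S -> nbelow x (a |: S) = (rank_lt a x + nbelow x S)%N.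
Proof. by move=> Sa; rewrite /nbelow big_setU1. Qed.

Lemma nbelowD1 x a S : a \in S -> nbelow x S = (rank_lt a x + nbelow x (S :\ a))%N.
Proof. by move=> Sa; rewrite /nbelow (big_setD1 a). Qed.

Lemma nbelow_seq x w : uniq w -> nbelow x [set y in w] = count (rank_lt^~ x) w.
Proof.
move=> uw; have /seq.permP count_eq : perm_eq (enum [set y in w]) w.
  by apply: uniq_perm; rewrite ?enum_uniq // => y; rewrite mem_enum inE.
by rewrite nbelowE count_eq.
Qed.

(* Left multiplication by the generator x: to put x into place in the increasing
   product e_S it has to pass the elements of S below it. *)
Definition wedge x g : E :=
  [ffun S : {set V} => if x \in S then (-1) ^+ nbelow x S * g (S :\ x) else 0].

Lemma wedge_is_linear x : linear (wedge x).
Proof.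
move=> c f g; apply/ffunP => S; rewrite !ffunE.
by case: (x \in S); rewrite ?scaler0 ?addr0 // mulrDr scalerAr.
Qed.
HB.instance Definition _ x := GRing.isLinear.Build rat E E *:%R (wedge x) (wedge_is_linear x).

Lemma monoE w S :
  mono w S = if uniq w && (S == [set y in w]) then (-1) ^+ inversions w else 0.
Proof.
rewrite /mono; case: (uniq w); rewrite !ffunE //=.
by case: eqP => _; [exact: mulr1 | exact: scaler0].
Qed.

Lemma mono_nonuniq w : ~~ uniq w -> mono w = 0.
Proof. by rewrite /mono => /negPf ->. Qed.

Lemma mono_cons x w : mono (x :: w) = wedge x (mono w).
Proof.
apply/ffunP => S; rewrite ffunE !monoE /=.
have [wx|wNx] /= := boolP (x \in w).
  case: ifP => // _; case: eqP; rewrite ?andbF ?mulr0 // => def_w.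
  by move: (setD11 x S); rewrite def_w inE wx.
case uw: (uniq w) => /=; last by case: ifP; rewrite ?mulr0.
have -> : [set y in x :: w] = x |: [set y in w] by apply/setP => y; rewrite !inE.
have [->|neq_S] := eqVneq S (x |: [set y in w]).
  rewrite setU11 setU1K ?inE // eqxx exprD.
  by rewrite nbelowU1 ?inE // rank_ltxx nbelow_seq.
case: ifP => // Sx; case: eqP; rewrite ?mulr0 // => def_w.
by rewrite -def_w setD1K ?eqxx in neq_S.
Qed.


Lemma wedgeC x y g : wedge x (wedge y g) = - wedge y (wedge x g).
Proof.
apply/ffunP => S; rewrite !ffunE.
have [<-|neq_xy] := eqVneq x y.
  by case: (x \in S); rewrite ?oppr0 // !in_setD1 eqxx /= mulr0 oppr0.
rewrite !in_setD1 neq_xy eq_sym neq_xy /=.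
case Sx: (x \in S); case Sy: (y \in S); rewrite /= ?mulr0 ?oppr0 //.
have -> : S :\ y :\ x = S :\ x :\ y by apply/setP => z; rewrite !inE andbCA.
rewrite (nbelowD1 x Sy) (nbelowD1 y Sx) (rank_ltNge neq_xy).
by case: (rank_lt y x); rewrite /= !exprD expr1 expr0 !mul1r !mulN1r ?mulNr ?mulrN ?opprK mulrCA.
Qed.

Lemma derivE a f T :
  deriv a f T = if a \in T then 0 else (-1) ^+ nbelow a T * f (a |: T).
Proof.
rewrite ffunE; case: ifP => // Ta.
by rewrite index_enum_set ?setU11 // nbelowU1 ?Ta // rank_ltxx.
Qed.

Lemma deriv_is_linear a : linear (deriv a).
Proof.
move=> c f g; apply/ffunP => T; rewrite !ffunE.
by case: (a \in T); rewrite ?scaler0 ?addr0 // mulrDr scalerAr.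
Qed.
HB.instance Definition _ a := GRing.isLinear.Build rat E E *:%R (deriv a) (deriv_is_linear a).

Lemma deriv_wedge a x g :
  deriv a (wedge x g) = (x == a)%:R *: g - wedge x (deriv a g).
Proof.
apply/ffunP => T; rewrite !(derivE, ffunE).
have [<-|neq_xa] := eqVneq x a.
  rewrite scale1r; case: (boolP (x \in T)) => Tx.
    by rewrite setD11 setD1K // (nbelowD1 x Tx) rank_ltxx signrMK subrr.
  by rewrite setU11 setU1K // nbelowU1 // rank_ltxx signrMK subr0.
rewrite scale0r add0r in_setU1 (negbTE neq_xa) /=.
case Ta: (a \in T); case Tx: (x \in T); rewrite ?mulr0 ?oppr0 //.
  by rewrite in_setD1 Ta andbT eq_sym neq_xa /= mulr0 oppr0.
rewrite in_setD1 Ta andbF.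
have -> : (a |: T) :\ x = a |: (T :\ x).
  by apply/setP => z; rewrite !inE; case: (eqVneq z a) => [->|] //=; rewrite eq_sym neq_xa.
rewrite nbelowU1 ?Ta // (nbelowD1 a Tx) (rank_ltNge neq_xa).
by case: (rank_lt a x); rewrite /= !exprD expr1 expr0 !mul1r !mulN1r ?mulNr ?mulrN ?opprK mulrCA.
Qed.

Definition dcoef a w : rat := if a \in w then (-1) ^+ index a w else 0.

Lemma deriv_mono a w : uniq w -> deriv a (mono w) = dcoef a w *: mono (rem a w).
Proof.
rewrite /dcoef; elim: w => [_|x w IHw /= /andP[wNx uw]].
  apply/ffunP => T; rewrite derivE monoE ffunE /= scale0r.
  case: ifP => // _; case: eqP; rewrite ?mulr0 // => def_T.
  by move: (setU11 a T); rewrite def_T inE.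
rewrite mono_cons deriv_wedge IHw // linearZ /= -mono_cons in_cons (eq_sym a x).
have [<-|neq_xa] /= := eqVneq x a.
  by rewrite (negbTE wNx) scale0r subr0 !scale1r.
rewrite scale0r add0r -scaleNr.
by case: (a \in w); rewrite ?oppr0 // exprS mulN1r.
Qed.

Lemma dcoef_catr a u v : a \notin v -> dcoef a (u ++ v) = dcoef a u.
Proof.
move=> vNa; rewrite /dcoef mem_cat (negbTE vNa) orbF.
by case: ifP => // ua; rewrite index_cat ua.
Qed.

Lemma rem_catr a u v : a \notin v -> rem a (u ++ v) = rem a u ++ v.
Proof. by move=> vNa; elim: u => [|x u IHu] /=; [rewrite rem_id | case: eqP; rewrite // IHu]. Qed.

(** * The action of S_n and the alternant *)

Lemma mono_cat_cons u x v :
  mono (u ++ x :: v) = (-1) ^+ size u *: mono (x :: u ++ v).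
Proof.
elim: u => [|y u IHu] /=; first by rewrite scale1r.
by rewrite mono_cons IHu linearZ /= mono_cons wedgeC -!mono_cons exprS mulN1r scaleNr scalerN.
Qed.

Lemma mono_perm_eq w w' : perm_eq w w' ->
  exists k, forall F : V -> V, mono (map F w') = (-1) ^+ k *: mono (map F w).
Proof.
elim: w w' => [|x w IHw] w' eq_ww'.
  case: w' eq_ww' => [_|? ? /perm_size //].
  by exists 0%N => F; rewrite expr0 scale1r.
have w'x : x \in w' by rewrite -(perm_mem eq_ww') mem_head.
case/splitPr: w'x eq_ww' => u v eq_ww'.
have /IHw[k Hk] : perm_eq w (u ++ v).
  by rewrite -(perm_cons x); apply: perm_trans eq_ww' _; rewrite -(cat1s x v) perm_catCA.
exists (size u + k)%N => F; rewrite map_cat /= mono_cat_cons size_map mono_cons -map_cat.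
by rewrite Hk linearZ /= -mono_cons scalerA exprD.
Qed.

Lemma mono_enumE S T : mono (enum S) T = (T == S)%:R.
Proof.
rewrite monoE enum_uniq inversions_sorted ?sorted_enum_set //.
have -> : [set y in enum S] = S by apply/setP => y; rewrite inE mem_enum.
by case: (T == S).
Qed.

Lemma ext_expand f : f = \sum_S f S *: mono (enum S).
Proof.
apply/ffunP => T; rewrite sum_ffunE (bigD1 T) //= big1 => [|S neq_ST].
  by rewrite !ffunE mono_enumE eqxx addr0; exact/esym/mulr1.
by rewrite !ffunE mono_enumE eq_sym (negbTE neq_ST); exact: mulr0.
Qed.

Lemma actv_inj (s : 'S_n) : injective (actv s).
Proof. by move=> [c i] [d j] [-> /perm_inj ->]. Qed.

Lemma act_is_linear (s : 'S_n) : linear (act s).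
Proof.
move=> c f g; rewrite /act scaler_sumr -big_split; apply: eq_bigr => S _ /=.
by rewrite !ffunE scalerDl scalerA.
Qed.
HB.instance Definition _ s := GRing.isLinear.Build rat E E *:%R (act s) (act_is_linear s).

Lemma act_mono_enum (s : 'S_n) S : act s (mono (enum S)) = mono (map (actv s) (enum S)).
Proof.
rewrite /act (bigD1 S) //= big1 ?addr0 => [|T neq_TS]; rewrite mono_enumE.
  by rewrite eqxx scale1r.
by rewrite (negbTE neq_TS) scale0r.
Qed.

Lemma act_mono (s : 'S_n) w : act s (mono w) = mono (map (actv s) w).
Proof.
have [uw|uNw] := boolP (uniq w); last first.
  by rewrite !mono_nonuniq ?linear0 // map_inj_uniq //; exact: actv_inj.
have /mono_perm_eq[k Hk] : perm_eq (enum [set y in w]) w.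
  by apply: uniq_perm; rewrite ?enum_uniq // => y; rewrite mem_enum inE.
by have := Hk id; rewrite !map_id => ->; rewrite linearZ /= act_mono_enum -Hk.
Qed.

Lemma act_mul (s t : 'S_n) f : act s (act t f) = act (t * s) f.
Proof.
rewrite [act t f]/act linear_sum; apply: eq_bigr => S _ /=.
rewrite linearZ /= act_mono -map_comp; congr (_ *: mono _); apply: eq_map => x.
by rewrite /actv /= permM.
Qed.

Lemma dcoef_map (F : V -> V) a w : injective F -> dcoef (F a) (map F w) = dcoef a w.
Proof. by move=> injF; rewrite /dcoef mem_map // index_map. Qed.

Lemma rem_map (F : V -> V) a w : injective F -> rem (F a) (map F w) = map F (rem a w).
Proof.
by move=> injF; elim: w => //= x w IHw; rewrite (inj_eq injF); case: eqP; rewrite //= IHw.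
Qed.

Lemma act_deriv (s : 'S_n) a f : act s (deriv a f) = deriv (actv s a) (act s f).
Proof.
rewrite [in LHS](ext_expand f) [act s f]/act !linear_sum; apply: eq_bigr => S _ /=.
have inj_s := @actv_inj s.
rewrite !linearZ /= deriv_mono ?enum_uniq // deriv_mono ?map_inj_uniq ?enum_uniq //.
by rewrite linearZ /= act_mono dcoef_map // rem_map.
Qed.

Definition derivs (ds : seq V) f := foldr (@deriv n) f ds.

Lemma derivs_is_linear ds : linear (derivs ds).
Proof. by elim: ds => //= a ds IHds c f g; rewrite /derivs /= -/(derivs _ _) IHds linearP. Qed.
HB.instance Definition _ ds :=
  GRing.isLinear.Build rat E E *:%R (derivs ds) (derivs_is_linear ds).

Lemma act_derivs (s : 'S_n) ds f :
  act s (derivs ds f) = derivs (map (actv s) ds) (act s f).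
Proof. by elim: ds => //= a ds IHds; rewrite act_deriv IHds. Qed.

Definition alt f : E := \sum_(s : 'S_n) ((-1) ^+ s : rat) *: act s f.

Lemma alt_is_linear : linear alt.
Proof.
move=> c f g; rewrite /alt scaler_sumr -big_split; apply: eq_bigr => s _ /=.
by rewrite linearP scalerDr !scalerA mulrC.
Qed.
HB.instance Definition _ := GRing.isLinear.Build rat E E *:%R alt alt_is_linear.

Lemma altZ (c : rat) f : alt (c *: f) = c *: alt f.
Proof. exact: linearZ. Qed.

Lemma alt_act (t : 'S_n) f : alt (act t f) = ((-1) ^+ t : rat) *: alt f.
Proof.
rewrite /alt scaler_sumr [RHS](reindex_inj (mulgI t)); apply: eq_bigr => s _ /=.
by rewrite act_mul scalerA odd_permM signr_addb mulrA -signr_addb addbb mul1r.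
Qed.

Lemma alt_act_odd_eq0 (t : 'S_n) f : odd_perm t -> act t f = f -> alt f = 0.
Proof.
move=> odd_t fix_f; have := alt_act t f; rewrite fix_f odd_t expr1 scaleN1r.
by move/eqP; rewrite -subr_eq0 opprK -mulr2n -scaler_nat scaler_eq0 => /orP[|/eqP].
Qed.

Lemma alt_mono_eq0 (i j : 'I_n) w : i != j ->
  {in w, forall x, x.2 != i} -> {in w, forall x, x.2 != j} -> alt (mono w) = 0.
Proof.
move=> neq_ij w_i w_j; apply: (@alt_act_odd_eq0 (tperm i j)); first by rewrite odd_tperm.
rewrite act_mono; congr (mono _); rewrite -[RHS]map_id; apply/eq_in_map => -[c k] wx.
by rewrite /actv /= tpermD // eq_sym ?(w_i _ wx) ?(w_j _ wx).
Qed.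

(** * Polarized derivative sums *)

Lemma deriv2 a f : deriv a (deriv a f) = 0.
Proof.
apply/ffunP => T; rewrite !derivE ffunE; case: ifP => // _.
by rewrite setU11 mulr0.
Qed.

Lemma iter_deriv_eq0 m a f : (1 < m)%N -> iter m (deriv a) f = 0.
Proof. by case: m => [|[|m]] //= _; rewrite deriv2. Qed.

Lemma iter_deriv0 m a : iter m (deriv a) 0 = 0.
Proof. by elim: m => //= m ->; rewrite linear0. Qed.

Lemma derivs_cons a ds f : derivs (a :: ds) f = deriv a (derivs ds f).
Proof. by []. Qed.

Lemma derivs_nseq m a f : derivs (nseq m a) f = iter m (deriv a) f.
Proof. by elim: m => //= m <-. Qed.

Definition dvars h k l (j : 'I_n) : seq V :=
  nseq h (theta j) ++ nseq k (xi j) ++ nseq l (rho j).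

Definition Dsum h k l f : E := \sum_(j < n) derivs (dvars h k l j) f.

Lemma size_dvars h k l j : size (dvars h k l j) = (h + k + l)%N.
Proof. by rewrite !size_cat !size_nseq addnA. Qed.

Lemma all_dvars h k l j : all (fun a => a.2 == j) (dvars h k l j).
Proof. by rewrite !all_cat !all_nseq /= eqxx !orbT. Qed.

Lemma DsumE h k l f : Dsum h k l f = \sum_(j < n)
  iter h (deriv (theta j)) (iter k (deriv (xi j)) (iter l (deriv (rho j)) f)).
Proof. by apply: eq_bigr => j _; rewrite /derivs !foldr_cat -!/(derivs _ _) !derivs_nseq. Qed.

Lemma triag_harmonic_Dsum f :
  (forall h k l : bool, h || k || l -> Dsum h k l f = 0) -> triag_harmonic f.
Proof.
move=> Df h k l hkl.
have [|small] := boolP [|| 1 < h, 1 < k | 1 < l]%N.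
  by case/or3P=> big; apply: big1 => j _; rewrite (iter_deriv_eq0 _ _ big) ?iter_deriv0.
have nat_bool m : (m <= 1)%N -> exists b : bool, m = b.
  by case: m => [|[|]] // _; [exists false | exists true].
move: small hkl; rewrite !negb_or -!leqNgt => /and3P[/nat_bool[bh ->]].
move=> /nat_bool[bk ->] /nat_bool[bl ->] hkl; rewrite -DsumE Df //.
by move: hkl; case: bh; case: bk; case: bl.
Qed.

Lemma map_dvars (s : 'S_n) h k l j : map (actv s) (dvars h k l j) = dvars h k l (s j).
Proof. by rewrite !map_cat !map_nseq. Qed.

Lemma Dsum_alt h k l f : Dsum h k l (alt f) = alt (Dsum h k l f).
Proof.
rewrite /Dsum /alt; under eq_bigr do rewrite [derivs _ _]linear_sum.
rewrite exchange_big; apply: eq_bigr => s _.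
rewrite [act s (\sum_j _)]linear_sum [RHS]scaler_sumr [LHS](reindex_inj (@perm_inj _ s)).
by apply: eq_bigr => j _; rewrite linearZ /= act_derivs map_dvars.
Qed.

Lemma derivs_mono ds w : uniq w ->
  exists2 c, derivs ds (mono w) = c *: mono [seq x <- w | x \notin ds]
           & c != 0 -> {subset ds <= w}.
Proof.
move=> uw; elim: ds => [|a ds [c IHc sub_ds]].
  by exists 1; rewrite ?scale1r // (@eq_filter _ _ predT) ?filter_predT.
set w' := [seq x <- w | x \notin ds] in IHc.
have uw' : uniq w' by rewrite filter_uniq.
exists (c * dcoef a w').
  rewrite derivs_cons IHc linearZ /= deriv_mono // scalerA rem_filter // -filter_predI.
  by congr (_ *: mono _); apply: eq_filter => x; rewrite /= inE negb_or.
rewrite mulf_eq0 negb_or /dcoef => /andP[/sub_ds sub]; case: ifP => [w'a _|]; last by rewrite eqxx.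
by move=> x /predU1P[->|/sub //]; move: w'a; rewrite mem_filter => /andP[].
Qed.

Lemma derivs_mono_absent a ds w : uniq w -> a \in ds -> a \notin w ->
  derivs ds (mono w) = 0.
Proof.
move=> uw ds_a wNa; have [c -> sub_ds] := derivs_mono ds uw.
by have [->|/sub_ds/(_ a ds_a) wa] := eqVneq c 0; [rewrite scale0r | rewrite wa in wNa].
Qed.

Lemma alt_derivs_mono_eq0 ds w (i j : 'I_n) : uniq w -> i != j ->
  {in w, forall x, x.2 = i -> x \in ds} -> {in w, forall x, x.2 != j} ->
  alt (derivs ds (mono w)) = 0.
Proof.
move=> uw neq_ij w_i w_j; have [c -> _] := derivs_mono ds uw.
rewrite linearZ /= (alt_mono_eq0 neq_ij) ?scaler0 // => x; rewrite mem_filter => /andP[xNds wx].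
  by apply: contraNneq xNds => /(w_i x wx).
exact: w_j.
Qed.

Lemma alt_derivs_mono_single_eq0 ds w (i j : 'I_n) : uniq w -> (0 < size ds)%N ->
  all (fun a => a.2 == i) ds -> {in w &, forall x y, x.2 = i -> y.2 = i -> x = y} ->
  {in w, forall x, x.2 != j} -> alt (derivs ds (mono w)) = 0.
Proof.
case: ds => // a ds uw _ /andP[/eqP a_i _] w_i1 w_j.
have [wa|wNa] := boolP (a \in w).
  apply: (alt_derivs_mono_eq0 (i := i) (j := j)) => // [|x wx x_i].
    by rewrite -a_i w_j.
  by rewrite (w_i1 x a) ?mem_head.
by rewrite (derivs_mono_absent uw (mem_head a ds)) // linear0.
Qed.

End ExteriorAlgebra.

(** * The seeds *)

Lemma vw_ord n (c : 'I_3) (i : 'I_n) : vw n c i = [:: (c, i)].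
Proof.
by rewrite /vw (eq_filter (a2 := pred1 i)) ?filter_pred1_uniq ?enum_uniq ?mem_enum.
Qed.

Lemma mem_thetas n a b (x : var n) :
  (x \in thetas n a b) = (x.1 == kth) && (a <= x.2 < a + b)%N.
Proof.
rewrite /thetas; apply/flatten_mapP/idP => [[k]|].
  rewrite mem_iota => /andP[a_k k_ab] /mapP[i]; rewrite mem_filter => /andP[/eqP i_k _] ->.
  by rewrite /= i_k a_k.
case: x => c i /andP[/eqP /= -> a_i]; exists (val i); first by rewrite mem_iota.
by apply/mapP; exists i; rewrite // mem_filter eqxx mem_enum.
Qed.

Lemma uniq_thetas n a b : uniq (thetas n a b).
Proof.
elim: b => [|b IHb] //; rewrite /thetas -[b.+1]addn1 iotaD map_cat flatten_cat cat_uniq.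
rewrite -/(thetas n a b) IHb /= cats0; apply/andP; split.
  apply/hasPn => x /mapP[i]; rewrite mem_filter => /andP[/eqP i_b _] ->.
  by rewrite mem_thetas /= i_b ltnn andbF.
by rewrite map_inj_uniq => [|i j []//]; apply/filter_uniq/enum_uniq.
Qed.

Lemma Delta1_harmonic n : (1 <= n)%N -> triag_harmonic (Delta1 n).
Proof.
case: n => // m _; apply: triag_harmonic_Dsum => h k l hkl.
rewrite [Delta1 _]/(alt _) Dsum_alt /Dsum linear_sum big1 // => j _.
apply: (alt_derivs_mono_single_eq0 (i := j) (j := ord_max)); first exact: uniq_thetas.
- by rewrite size_dvars; case: h k l hkl => [] [] [].
- exact: all_dvars.
- by move=> [c i] [d i']; rewrite !mem_thetas /= => /andP[/eqP-> _] /andP[/eqP-> _] -> ->.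
- by move=> x; rewrite mem_thetas => /andP[_ /andP[_ lt_x]]; rewrite -val_eqE /= ltn_eqF.
Qed.

Section SecondarySeed.
Variable m : nat.
Local Notation n := m.+3.
Local Notation V := (var n).
Local Notation Th := (thetas n 2 m).

(* i0 and i1 are the indices 1 and 2 of the paper. Rewrites below are confined to one
   side of an equation: otherwise Rocq tries to decide by conversion whether two
   different seed monomials are equal, which unfolds the whole exterior algebra. *)
Definition i0 : 'I_n := ord0.
Definition i1 : 'I_n := Ordinal (isT : (1 < n)%N).
Definition kinds : seq 'I_3 := [:: kth; kxi; krho].

Definition seed_word (c : 'I_3) : seq V :=
  [seq (k, if k == c then i0 else i1) | k <- kinds].

Definition seed_mono (c : 'I_3) : ext n := mono (seed_word c ++ Th).

Lemma Delta2_seedE : Delta2_seed n = \sum_(c <- kinds) seed_mono c.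
Proof.
have sum3 (x y z : ext n) : x + (y + (z + 0)) = x + y + z by rewrite addr0 addrA.
rewrite /Delta2_seed (vw_ord kth i0) (vw_ord kxi i1) (vw_ord krho i1).
rewrite (vw_ord kth i1) (vw_ord kxi i0) (vw_ord krho i0) !subSS subn0.
by rewrite !big_cons big_nil [RHS]sum3.
Qed.

Lemma seed_word_index c x : x \in seed_word c -> x.2 = if x.1 == c then i0 else i1.
Proof. by case/mapP => k _ ->. Qed.

Lemma seed_word_lt2 c x : x \in seed_word c -> (x.2 < 2)%N.
Proof. by move/seed_word_index->; case: ifP. Qed.

Lemma seed_word_i0 c x : x \in seed_word c -> x.2 != i1 -> x = (c, i0).
Proof. by case/mapP => k _ ->; case: (eqVneq k c) => [->|_] //=; rewrite eqxx. Qed.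

Lemma seed_wordNi1 c : (c, i1) \notin seed_word c.
Proof. by apply/negP => /seed_word_index /=; rewrite eqxx => /(congr1 val). Qed.

Lemma mem_Th x : x \in Th -> x = theta x.2 /\ (2 <= x.2 < m.+2)%N.
Proof. by case: x => c i; rewrite mem_thetas /= => /andP[/eqP-> ?]. Qed.

Lemma i1_notin_Th c : (c, i1) \notin Th.
Proof. by apply/negP => /mem_Th[_ /andP[]]. Qed.

Lemma uniq_seed_word c : uniq (seed_word c ++ Th).
Proof.
rewrite cat_uniq uniq_thetas andbT map_inj_uniq => [|k k' [] //]; apply/hasPn => x.
by case/mem_Th=> _ /andP[x2 _]; apply/negP => /seed_word_lt2; rewrite ltnNge x2.
Qed.

Lemma seed_word_avoid c : {in seed_word c ++ Th, forall x, x.2 != ord_max}.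
Proof.
move=> x; rewrite mem_cat -val_eqE /= => /orP[/seed_word_lt2 lt_x|/mem_Th[_ /andP[_ lt_x]]].
  by rewrite ltn_eqF // (leq_trans lt_x).
by rewrite ltn_eqF.
Qed.

Lemma seed_word_single c (j : 'I_n) : j != i1 ->
  {in seed_word c ++ Th &, forall x y, x.2 = j -> y.2 = j -> x = y}.
Proof.
move=> neq_j1 x y; rewrite !mem_cat.
have at_i0 z : z \in seed_word c -> z.2 = j -> z = (c, i0).
  by move=> wz z_j; apply: seed_word_i0; rewrite ?z_j.
case/orP=> [wx|Tx] /orP[wy|Ty] x_j y_j.
- by rewrite (at_i0 x wx x_j) (at_i0 y wy y_j).
- have [_ /andP[y2 _]] := mem_Th Ty.
  by have := seed_word_lt2 wx; rewrite x_j -y_j ltnNge y2.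
- have [_ /andP[x2 _]] := mem_Th Tx.
  by have := seed_word_lt2 wy; rewrite y_j -x_j ltnNge x2.
- by have [-> _] := mem_Th Tx; have [-> _] := mem_Th Ty; rewrite x_j y_j.
Qed.

Lemma alt_derivs_seed_mono (h k l : bool) c (j : 'I_n) : h || k || l -> j != i1 ->
  alt (derivs (dvars h k l j) (seed_mono c)) = 0.
Proof.
move=> hkl neq_j1; apply: (alt_derivs_mono_single_eq0 (i := j) (j := ord_max)).
- exact: uniq_seed_word.
- by rewrite size_dvars; case: h k l hkl => [] [] [].
- exact: all_dvars.
- exact: seed_word_single.
- exact: seed_word_avoid.
Qed.

Lemma alt_derivs_seed_mono_i1 ds c :
  ((c, i1) \in ds) || all (fun x => (x.2 == i1) ==> (x \in ds)) (seed_word c) ->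
  alt (derivs ds (seed_mono c)) = 0.
Proof.
case/orP => [ds_c|all_ds].
  rewrite (derivs_mono_absent (uniq_seed_word c) ds_c) ?linear0 //.
  by rewrite mem_cat negb_or seed_wordNi1 i1_notin_Th.
apply: (alt_derivs_mono_eq0 (i := i1) (j := ord_max)) => //.
- exact: uniq_seed_word.
- move=> x; rewrite mem_cat => /orP[wx x_1|/mem_Th[_ /andP[x2 _]] x_1].
    by have := allP all_ds x wx; rewrite x_1 eqxx.
  by rewrite x_1 in x2.
- exact: seed_word_avoid.
Qed.

Lemma alt_mono_swap01 u v : map (actv (tperm i0 i1)) u = v ->
  alt (mono (v ++ Th)) = - alt (mono (u ++ Th)).
Proof.
move=> <-; have fixTh : map (actv (tperm i0 i1)) Th = Th.
  rewrite -[RHS]map_id; apply/eq_in_map => x /mem_Th[-> /andP[x2 _]].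
  by rewrite /actv tpermD // -val_eqE /= eq_sym gtn_eqF // ltnW.
have odd_t : odd_perm (tperm i0 i1) by rewrite odd_tperm.
by rewrite -[in LHS]fixTh -map_cat -act_mono alt_act odd_t expr1 scaleN1r.
Qed.

Lemma deriv_seed_mono a c : a \notin Th ->
  deriv a (seed_mono c) = dcoef a (seed_word c) *: mono (rem a (seed_word c) ++ Th).
Proof. by move=> Tha; rewrite deriv_mono ?uniq_seed_word // dcoef_catr // rem_catr. Qed.

Lemma alt_deriv_seed_mono_self c : alt (deriv (c, i1) (seed_mono c)) = 0.
Proof.
by rewrite (deriv_seed_mono _ (i1_notin_Th c)) /dcoef (negbTE (seed_wordNi1 c)) scale0r linear0.
Qed.

Lemma alt_deriv_seed_mono_swap c' c1 c2 (a := (c', i1)) :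
  dcoef a (seed_word c1) = dcoef a (seed_word c2) ->
  map (actv (tperm i0 i1)) (rem a (seed_word c1)) = rem a (seed_word c2) ->
  alt (deriv a (seed_mono c1)) = - alt (deriv a (seed_mono c2)).
Proof.
move=> eq_dcoef eq_rem; have Tha := i1_notin_Th c'.
rewrite [in LHS](deriv_seed_mono _ Tha) [in RHS](deriv_seed_mono _ Tha) eq_dcoef.
by rewrite [in LHS]altZ [in RHS]altZ [in RHS](alt_mono_swap01 eq_rem) scalerN opprK.
Qed.

Lemma alt_derivs_Delta2_seed ds :
  {in kinds, forall c, alt (derivs ds (seed_mono c)) = 0} ->
  alt (derivs ds (Delta2_seed n)) = 0.
Proof.
move=> vanish; rewrite Delta2_seedE [derivs _ _]linear_sum [alt _]linear_sum /=.
by rewrite big_seq; apply: big1 => c /vanish.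
Qed.

Lemma sum_kinds_eq0 (G : 'I_3 -> ext n) c c1 c2 : perm_eq kinds [:: c; c1; c2] ->
  G c = 0 -> G c1 = - G c2 -> \sum_(k <- kinds) G k = 0.
Proof.
move=> perm_c Gc G12; rewrite (perm_big _ perm_c) !big_cons big_nil /=.
by rewrite Gc G12 add0r addr0 addNr.
Qed.

Lemma alt_deriv_Delta2_seed c' c1 c2 (a := (c', i1)) : perm_eq kinds [:: c'; c1; c2] ->
  dcoef a (seed_word c1) = dcoef a (seed_word c2) ->
  map (actv (tperm i0 i1)) (rem a (seed_word c1)) = rem a (seed_word c2) ->
  alt (deriv a (Delta2_seed n)) = 0.
Proof.
move=> perm_c eq_dcoef eq_rem; rewrite Delta2_seedE [deriv _ _]linear_sum [alt _]linear_sum /=.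
apply: (sum_kinds_eq0 perm_c); first exact: alt_deriv_seed_mono_self.
exact: alt_deriv_seed_mono_swap.
Qed.

Lemma alt_derivs_Delta2_seed_i1 ds :
  all (fun c => ((c, i1) \in ds) || all (fun x => (x.2 == i1) ==> (x \in ds)) (seed_word c))
      kinds ->
  alt (derivs ds (Delta2_seed n)) = 0.
Proof.
move=> /allP vanish; apply: alt_derivs_Delta2_seed => c /vanish.
exact: alt_derivs_seed_mono_i1.
Qed.

Lemma Delta2_harmonic : triag_harmonic (Delta2 n).
Proof.
apply: triag_harmonic_Dsum => h k l hkl.
rewrite [Delta2 n]/(alt _) Dsum_alt /Dsum linear_sum; apply: big1 => j _.
have [->|neq_j1] := eqVneq j i1; last first.
  by apply: alt_derivs_Delta2_seed => c _; exact: alt_derivs_seed_mono.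
move: hkl; case: h; case: k; case: l => hkl.
- exact: alt_derivs_Delta2_seed_i1.
- exact: alt_derivs_Delta2_seed_i1.
- exact: alt_derivs_Delta2_seed_i1.
- apply: (@alt_deriv_Delta2_seed kth kxi krho) => //.
  by rewrite /= /actv /= tpermL tpermR.
- exact: alt_derivs_Delta2_seed_i1.
- apply: (@alt_deriv_Delta2_seed kxi kth krho) => //.
  by rewrite /= /actv /= tpermL tpermR.
- apply: (@alt_deriv_Delta2_seed krho kth kxi) => //.
  by rewrite /= /actv /= tpermL tpermR.
- by case: hkl.
Qed.

End SecondarySeed.

Theorem proposition4p4 :
  (forall n : nat, (1 <= n)%N -> triag_harmonic (Delta1 n)) /\
  (forall n : nat, (3 <= n)%N -> triag_harmonic (Delta2 n)).
Proof.
split; first exact: Delta1_harmonic.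
by case=> [|[|[|m]]] // _; exact: Delta2_harmonic.
Qed.
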